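(* Fix $\epsilon>0$ and define \[U_1:=\left\{(a,b)\in\bigl([0,1/2)\times[1/2,1)\bigr)\cup\bigl([1/2,1)\times[0,1/2)\bigr):\ a+b<\tfrac34\right\},\] \[U_2:=\left\{(a,b)\in[0,1/2)\times[0,1):\ \tfrac34+\epsilon<a+b<\tfrac54\right\},\] and $U:=U_1\cup U_2\subset\mathbb{R}^2$. Let $x,z\in U$ and let $y^*:=\frac{x+z}{2}$. Then $y^*\neq u+\xi$ for all $u\in U$ and all $\xi\in\{(1/2,1/2),(1/2,0),(0,1/2)\}$. *)

From Stdlib Require Import Reals.
Open Scope R_scope.

Definition pt := (R * R)%type.

Definition U1 (p : pt) : Prop :=
  let (a, b) := p in
  ((0 <= a < 1/2 /\ 1/2 <= b < 1) \/ (1/2 <= a < 1 /\ 0 <= b < 1/2))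
  /\ a + b < 3/4.

Definition U2 (eps : R) (p : pt) : Prop :=
  let (a, b) := p in
  (0 <= a < 1/2 /\ 0 <= b < 1) /\ 3/4 + eps < a + b < 5/4.

Definition U (eps : R) (p : pt) : Prop := U1 p \/ U2 eps p.

Definition ptadd (p q : pt) : pt := (fst p + fst q, snd p + snd q).
Definition midpoint (p q : pt) : pt := ((fst p + fst q) / 2, (snd p + snd q) / 2).

Definition Xi (xi : pt) : Prop :=
  xi = (1/2, 1/2) \/ xi = (1/2, 0) \/ xi = (0, 1/2).

From Stdlib Require Import Reals Lra.
Open Scope R_scope.

(* Write s(p) for the coordinate sum.  Points of U lie in [0,1)^2 and have
   s in [1/2, 5/4); those with first coordinate at least 1/2 lie in U1 and
   have s < 3/4.  Hence a midpoint of two points of U whose first coordinate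
   is at least 1/2 has s < 1.  Now u + (1/2,1/2) has s >= 3/2 > 5/4, and
   u + (1/2,0) has first coordinate >= 1/2 and s >= 1.  For u + (0,1/2), a sum
   below 5/4 forces s(u) < 3/4, so u lies in U1; its second coordinate is
   below 1/2, so its first one is at least 1/2, and again s >= 1 with first
   coordinate >= 1/2. *)

Definition psum (p : pt) : R := fst p + snd p.

Lemma psum_midpoint (p q : pt) : psum (midpoint p q) = (psum p + psum q) / 2.
Proof. unfold psum, midpoint; simpl; field. Qed.

Lemma psum_ptadd (p q : pt) : psum (ptadd p q) = psum p + psum q.
Proof. unfold psum, ptadd; simpl; ring. Qed.

Section CoordinateSums.

Variable eps : R.

Lemma U_unit_square (p : pt) : U eps p -> (0 <= fst p < 1) /\ (0 <= snd p < 1).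
Proof. destruct p as [a b]; unfold U, U1, U2; simpl; intros; lra. Qed.

Lemma U_psum_lt (p : pt) : U eps p -> psum p < 5/4.
Proof. destruct p as [a b]; unfold U, U1, U2, psum; simpl; intros; lra. Qed.

Lemma U_fst_ge_half_psum (p : pt) : U eps p -> 1/2 <= fst p -> psum p < 3/4.
Proof. destruct p as [a b]; unfold U, U1, U2, psum; simpl; intros; lra. Qed.

Lemma midpoint_fst_ge_half_psum (x z : pt) :
  U eps x -> U eps z -> 1/2 <= fst (midpoint x z) -> psum (midpoint x z) < 1.
Proof.
  intros Ux Uz Hmid; rewrite psum_midpoint; simpl in Hmid.
  pose proof (U_psum_lt x Ux); pose proof (U_psum_lt z Uz).
  destruct (Rle_or_lt (1/2) (fst x)) as [Hx1 | Hx1].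
  - pose proof (U_fst_ge_half_psum x Ux Hx1); lra.
  - assert (Hz1 : 1/2 <= fst z) by lra.
    pose proof (U_fst_ge_half_psum z Uz Hz1); lra.
Qed.

Hypothesis eps_ge0 : 0 <= eps.

Lemma U_psum_ge (p : pt) : U eps p -> 1/2 <= psum p.
Proof. destruct p as [a b]; unfold U, U1, U2, psum; simpl; intros; lra. Qed.

Lemma U_psum_le_U1 (p : pt) : U eps p -> psum p <= 3/4 -> U1 p.
Proof. destruct p as [a b]; unfold U, U1, U2, psum; simpl; intros; lra. Qed.

Variables x z u : pt.
Hypotheses (Ux : U eps x) (Uz : U eps z) (Uu : U eps u).

Lemma midpoint_neq_shift_diag : midpoint x z <> ptadd u (1/2, 1/2).
Proof.
  intro E; assert (Hsum := f_equal psum E).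
  rewrite psum_midpoint, psum_ptadd in Hsum; unfold psum at 4 in Hsum; simpl in Hsum.
  pose proof (U_psum_lt x Ux); pose proof (U_psum_lt z Uz).
  pose proof (U_psum_ge u Uu); lra.
Qed.

Lemma midpoint_neq_shift_fst : midpoint x z <> ptadd u (1/2, 0).
Proof.
  intro E.
  assert (Hsum := f_equal psum E); rewrite psum_ptadd in Hsum.
  unfold psum at 3 in Hsum; simpl in Hsum.
  assert (Hfst : 1/2 <= fst (midpoint x z)).
  { rewrite E; simpl; pose proof (U_unit_square u Uu); lra. }
  pose proof (midpoint_fst_ge_half_psum x z Ux Uz Hfst).
  pose proof (U_psum_ge u Uu); lra.
Qed.

Lemma midpoint_neq_shift_snd : midpoint x z <> ptadd u (0, 1/2).
Proof.
  intro E.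
  assert (Hsum := f_equal psum E); rewrite psum_ptadd in Hsum.
  unfold psum at 3 in Hsum; simpl in Hsum.
  assert (Hsnd : snd u + 1/2 < 1).
  { replace (snd u + 1/2) with (snd (midpoint x z)) by (rewrite E; simpl; ring).
    simpl; pose proof (U_unit_square x Ux); pose proof (U_unit_square z Uz); lra. }
  assert (U1u : U1 u).
  { apply U_psum_le_U1; [exact Uu |].
    rewrite psum_midpoint in Hsum.
    pose proof (U_psum_lt x Ux); pose proof (U_psum_lt z Uz); lra. }
  assert (Hfst : 1/2 <= fst (midpoint x z)).
  { rewrite E; simpl; destruct u as [u1 u2]; unfold U1 in U1u; simpl in *; lra. }
  pose proof (midpoint_fst_ge_half_psum x z Ux Uz Hfst).
  pose proof (U_psum_ge u Uu); lra.
Qed.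

End CoordinateSums.

Theorem lemma4p5 (eps : R) (heps : 0 < eps) (x z : pt) :
  U eps x -> U eps z ->
  forall (u xi : pt), U eps u -> Xi xi -> midpoint x z <> ptadd u xi.
Proof.
  intros Ux Uz u xi Uu [-> | [-> | ->]].
  - exact (midpoint_neq_shift_diag eps (Rlt_le _ _ heps) x z u Ux Uz Uu).
  - exact (midpoint_neq_shift_fst eps (Rlt_le _ _ heps) x z u Ux Uz Uu).
  - exact (midpoint_neq_shift_snd eps (Rlt_le _ _ heps) x z u Ux Uz Uu).
Qed.
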